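(* Let $K$ be a totally ordered quasi-field of characteristic $1$, $a\in K$, $n\ge 1$. Let $E=K+KX+\dots+KX^{n-1}\subset K[X]$ and let $\varphi:K[X]\to E$ be the $K$-linear map (additive and compatible with multiplication by scalars) defined on monomials by $\varphi(X^m)=a^qX^r$ where $m=nq+r$ with $0\le r<n$. Then a polynomial $P\in K[X]$ is $*$-singular for $\varphi$ if and only if $P$ belongs to the ideal $J$ of $K[X]$ generated by the polynomials $X^{nk}+a^k$, $k\ge1$.
   Context: A quasi-field of characteristic $1$ is a commutative semiring $K$ with $1+1=1$ in which every nonzero element is multiplicatively invertible; it is ordered by $u\le v$ iff $u+v=v$, totally ordered meaning the order is total. A polynomial $P\in K[X]$ is $*$-singular for $\varphi$ if one can write $P=P_1+P_2$ with $P_1,P_2$ having disjoint sets of monomials and $\varphi(P_1)=\varphi(P_2)$. *)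

From HB Require Import structures.
From mathcomp Require Import all_boot all_order all_algebra.
Set Implicit Arguments. Unset Strict Implicit. Unset Printing Implicit Defensive.
Import GRing.Theory.
Local Open Scope ring_scope.

Definition quasi_field_char1 (K : comNzSemiRingType) : Prop :=
  (1 + 1 = 1 :> K) /\ (forall x : K, x != 0 -> exists y : K, x * y = 1).

(* The order u <= v iff u + v = v is total. *)
Definition totally_ordered_char1 (K : comNzSemiRingType) : Prop :=
  forall u v : K, u + v = v \/ v + u = u.

Definition phi (K : comNzSemiRingType) (n : nat) (a : K) (P : {poly K}) : {poly K} :=
  \sum_(m < size P) (P`_m * a ^+ (m %/ n))%:P * 'X^(m %% n).

Definition star_singular (K : comNzSemiRingType) (f : {poly K} -> {poly K})
    (P : {poly K}) : Prop :=
  exists P1 P2 : {poly K},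
    [/\ P = P1 + P2, (forall m : nat, P1`_m = 0 \/ P2`_m = 0) & f P1 = f P2].

(* Membership in the ideal of K[X] generated by X^(nk) + a^k, k >= 1:
   finite sums of multiples of generators (the pair (Q, k) encodes Q * gen_(k+1)). *)
Definition in_ideal_J (K : comNzSemiRingType) (n : nat) (a : K) (P : {poly K}) : Prop :=
  exists s : seq ({poly K} * nat),
    P = \sum_(x <- s) x.1 * ('X^(n * x.2.+1) + (a ^+ x.2.+1)%:P).

From HB Require Import structures.
From mathcomp Require Import all_boot all_order all_algebra.
From Stdlib Require Import ClassicalEpsilon.
Set Implicit Arguments. Unset Strict Implicit. Unset Printing Implicit Defensive.
Import GRing.Theory.
Local Open Scope ring_scope.

(* Addition in a characteristic-1 semiring K is idempotent, so u <= v iff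
   u + v = v is an order in which sums are suprema; when it is total, a finite
   sum is the largest of its terms.  Give the monomial X^m of P the weight
   w_P(m) = P_m a^(m/n).  Then the coefficient of X^j in phi P is the largest
   weight in the residue class j mod n.  Call P balanced when every weight is
   dominated by the weight of another monomial in the same residue class
   (i.e. the class maximum is attained twice, or vanishes).  We prove
   - *-singular => balanced: compare P_1 and P_2 coefficientwise;
   - balanced => *-singular: keep one maximising monomial per class in P_2;
   - in J => balanced: each generator multiple Q (X^(nk) + a^k) is balanced
     and balanced polynomials are closed under sums;
   - balanced => in J: if a = 0 balance kills the monomials of degree < n;
     otherwise P is a sum of binomials c X^m + d X^s of equal weight, each a
     multiple of a generator. *)

Definition sle (K : comNzSemiRingType) (u v : K) := u + v = v.
Notation "u ≼ v" := (sle u v) (at level 70).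

Lemma shift_eq n m s : m = s %[mod n] -> (m %/ n <= s %/ n)%N ->
  s = (m + n * (s %/ n - m %/ n))%N.
Proof.
move=> cls le_q; rewrite {1}(divn_eq s n) {1}(divn_eq m n) -cls.
by rewrite addnAC [(n * _)%N]mulnC -mulnDl subnKC.
Qed.

Section IdempotentOrder.

Variable K : comNzSemiRingType.
Hypothesis one_add1 : 1 + 1 = 1 :> K.

Lemma addxx (x : K) : x + x = x.
Proof. by rewrite -{1 2}[x]mulr1 -mulrDr one_add1 mulr1. Qed.

Lemma sle_refl (x : K) : x ≼ x.
Proof. exact: addxx. Qed.

Lemma sle0x (x : K) : 0 ≼ x.
Proof. exact: add0r. Qed.

Lemma sle_trans (y x z : K) : x ≼ y -> y ≼ z -> x ≼ z.
Proof. by move=> xy yz; rewrite /sle -yz addrA xy. Qed.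

Lemma sle_anti (x y : K) : x ≼ y -> y ≼ x -> x = y.
Proof. by move=> xy yx; rewrite -yx addrC xy. Qed.

Lemma sle_addl (x y : K) : x ≼ x + y.
Proof. by rewrite /sle addrA addxx. Qed.

Lemma sle_addr (x y : K) : y ≼ x + y.
Proof. by rewrite addrC; exact: sle_addl. Qed.

Lemma sle_add (x y z : K) : x ≼ z -> y ≼ z -> x + y ≼ z.
Proof. by move=> xz yz; rewrite /sle -addrA yz xz. Qed.

Lemma sle_mulr (c x y : K) : x ≼ y -> x * c ≼ y * c.
Proof. by move=> xy; rewrite /sle -mulrDl xy. Qed.

Lemma sle0 (x : K) : x ≼ 0 -> x = 0.
Proof. by rewrite /sle addr0. Qed.

Hypothesis total : totally_ordered_char1 K.

Lemma addr_sel (x y : K) : x + y = x \/ x + y = y.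
Proof. by case: (total x y) => h; [right | left; rewrite addrC]. Qed.

Section BigMax.

Variables (I : eqType) (r : seq I) (p : pred I) (f : I -> K).

Lemma sum_ub i : i \in r -> p i -> f i ≼ \sum_(j <- r | p j) f j.
Proof.
elim: r => // j s IH; rewrite inE big_cons => /orP[/eqP<- -> | /IH ub pi].
  exact: sle_addl.
by case: (p j); [apply: sle_trans (ub pi) _; exact: sle_addr | exact: ub].
Qed.

Lemma sum_lub x : (forall i, p i -> f i ≼ x) -> \sum_(j <- r | p j) f j ≼ x.
Proof.
move=> ub; elim: r => [|j s IH]; first by rewrite big_nil; exact: sle0x.
by rewrite big_cons; case: ifP => // pj; apply: sle_add => //; exact: ub.
Qed.

Lemma sum_attained :
  \sum_(j <- r | p j) f j = 0 \/
  exists i, [/\ i \in r, p i & \sum_(j <- r | p j) f j = f i].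
Proof.
elim: r => [|j s [IH | [i [si pi IH]]]]; first by left; rewrite big_nil.
- rewrite big_cons IH addr0; case: ifP => pj; last by left.
  by right; exists j; rewrite inE eqxx.
- rewrite big_cons IH; case: ifP => pj.
    by case: (addr_sel (f j) (f i)) => ->; right;
      [exists j; rewrite inE eqxx | exists i; rewrite inE si orbT].
  by right; exists i; rewrite inE si orbT.
Qed.

End BigMax.

Lemma finite_argmax (w : nat -> K) N (p : pred nat) r :
  (forall m, (N <= m)%N -> w m = 0) -> p r ->
  exists s, p s /\ forall m, p m -> w m ≼ w s.
Proof.
move=> w_null pr.
suff [s [ps ub]] : exists s, p s /\ forall m, (m < N)%N -> p m -> w m ≼ w s.
  exists s; split => // m pm.
  by case: (ltnP m N) => [mN | /w_null->]; [exact: ub | exact: sle0x].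
elim: N {w_null} => [|N [s [ps ub]]]; first by exists r.
have [pN | npN] := boolP (p N); last first.
  exists s; split => // m; rewrite ltnS leq_eqVlt.
  by case/orP=> [/eqP-> /(negP npN) // | ]; exact: ub.
case: (total (w N) (w s)) => [Ns | sN].
  exists s; split => // m; rewrite ltnS leq_eqVlt.
  by case/orP=> [/eqP-> _ // | ]; exact: ub.
exists N; split => // m; rewrite ltnS leq_eqVlt => /orP[/eqP-> _ | mN pm].
  exact: sle_refl.
exact: sle_trans (ub m mN pm) sN.
Qed.

Lemma class_selection n (w : nat -> K) N : (forall m, (N <= m)%N -> w m = 0) ->
  exists sel : nat -> nat, forall m, [/\ sel m = m %[mod n],
    (forall m', m' = m %[mod n] -> sel m' = sel m) &
    (forall m', m' = m %[mod n] -> w m' ≼ w (sel m))].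
Proof.
move=> w_null.
have pickP r : exists s, s = r %[mod n] /\
    forall m, m = r %[mod n] -> w m ≼ w s.
  have [s [/eqP cls ub]] := finite_argmax
    (p := fun m => (m %% n == r %% n)%N) w_null (eqxx (r %% n)%N).
  by exists s; split => // m /eqP; exact: ub.
have [pick {}pickP] := choice _ pickP.
exists (fun m => pick (m %% n)%N) => m; have [cls ub] := pickP (m %% n)%N.
by rewrite modn_mod in cls ub; split => // m' cls'; rewrite cls'.
Qed.

End IdempotentOrder.

Section Weights.

Variables (K : comNzSemiRingType) (n : nat) (a : K).
Hypothesis one_add1 : 1 + 1 = 1 :> K.
Hypothesis total : totally_ordered_char1 K.
Hypothesis n_gt0 : (0 < n)%N.

Local Notation J := (in_ideal_J n a).
Implicit Types P Q : {poly K}.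

(* The weight of the monomial of degree m of P: its contribution to phi P. *)
Definition weight P (m : nat) := P`_m * a ^+ (m %/ n).

Lemma weightD P Q m : weight (P + Q) m = weight P m + weight Q m.
Proof. by rewrite /weight coefD mulrDl. Qed.

Lemma weight_null P m : (size P <= m)%N -> weight P m = 0.
Proof. by move=> hm; rewrite /weight nth_default ?mul0r. Qed.

Lemma phi_coef P j :
  (phi n a P)`_j = \sum_(m < size P | (m %% n == j)%N) weight P m.
Proof.
rewrite /phi coef_sum [RHS]big_mkcond; apply: eq_bigr => m _ /=.
by rewrite coefCM coefXn eq_sym; case: eqP; rewrite ?mulr1 ?mulr0.
Qed.

Lemma phi_coef_ub P m : weight P m ≼ (phi n a P)`_(m %% n).
Proof.
have [mP | ] := ltnP m (size P); last by move/weight_null->; exact: sle0x.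
rewrite phi_coef; exact: (sum_ub one_add1 _ (mem_index_enum (Ordinal mP))).
Qed.

Lemma phi_coef_lub P j x :
  (forall m, (m %% n = j)%N -> weight P m ≼ x) -> (phi n a P)`_j ≼ x.
Proof. by move=> ub; rewrite phi_coef; apply: sum_lub => m /eqP; exact: ub. Qed.

Lemma phi_coef_attained P j :
  (phi n a P)`_j = 0 \/ exists m, (m %% n = j)%N /\ (phi n a P)`_j = weight P m.
Proof.
rewrite phi_coef.
have [-> | [m [_ /eqP cls ->]]] := sum_attained total (index_enum 'I_(size P))
  (fun m : 'I_(size P) => (m %% n == j)%N) (fun m => weight P m).
  by left.
by right; exists m.
Qed.

Definition has_rival P (m : nat) :=
  exists m', [/\ m' != m, m' = m %[mod n] & weight P m ≼ weight P m'].

Definition balanced P := forall m, has_rival P m.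

Lemma rival_of_null P m : weight P m = 0 -> has_rival P m.
Proof.
move=> w0; exists (m + n)%N; split; last by rewrite w0; exact: sle0x.
- by rewrite -{2}[m]addn0 eqn_add2l -lt0n.
- by rewrite modnDr.
Qed.

(* If X^m is absent from P2 and phi P1 = phi P2, the weight of X^m in
   P1 + P2 is bounded by a weight of P2 in its class, necessarily at m' <> m. *)
Lemma rival_of_split P1 P2 m :
  P2`_m = 0 -> phi n a P1 = phi n a P2 -> has_rival (P1 + P2) m.
Proof.
move=> P2m0 eq_phi.
have w2m : weight P2 m = 0 by rewrite /weight P2m0 mul0r.
have ub : weight (P1 + P2) m ≼ (phi n a P2)`_(m %% n).
  by rewrite -eq_phi weightD w2m addr0; exact: phi_coef_ub.
have [z | [m' [cls e]]] := phi_coef_attained P2 (m %% n).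
  by move: ub; rewrite z => /sle0; exact: rival_of_null.
have [m'm | ne] := eqVneq m' m.
  by move: ub; rewrite e m'm w2m => /sle0; exact: rival_of_null.
exists m'; split => //; apply: sle_trans ub _.
by rewrite e weightD; exact: sle_addr.
Qed.

Lemma singular_balanced P : star_singular (phi n a) P -> balanced P.
Proof.
case=> P1 [P2 [-> disj eq_phi]] m.
case: (disj m) => z; last exact: rival_of_split.
by rewrite addrC; apply: rival_of_split.
Qed.

Lemma balanced0 : balanced 0.
Proof. by move=> m; apply: rival_of_null; rewrite /weight coef0 mul0r. Qed.

(* The weight of a sum is that of one summand, which has a rival. *)
Lemma balancedD P Q : balanced P -> balanced Q -> balanced (P + Q).
Proof.
move=> bP bQ m; rewrite /has_rival weightD.
case: (addr_sel total (weight P m) (weight Q m)) => ->.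
  have [m' [ne cls le]] := bP m; exists m'; split => //.
  by apply: sle_trans le _; rewrite weightD; exact: sle_addl.
have [m' [ne cls le]] := bQ m; exists m'; split => //.
by apply: sle_trans le _; rewrite weightD; exact: sle_addr.
Qed.

Lemma weight_gen Q k m :
  weight (Q * ('X^(n * k) + (a ^+ k)%:P)) m =
  ((if (m < n * k)%N then 0 else weight Q (m - n * k)) + weight Q m) * a ^+ k.
Proof.
rewrite /weight mulrDr coefD coefMXn coefMC !mulrDl mulrAC; congr (_ + _).
case: ltnP => [_ | nk_le_m]; first by rewrite !mul0r.
rewrite -mulrA -exprD; congr (_ * a ^+ _).
by rewrite -{1}(subnK nk_le_m) addnC mulnC divnMDl // addnC.
Qed.

(* So the weight at m is rivalled at m + nk or at m - nk. *)
Lemma balanced_gen Q k : (0 < k)%N ->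
  balanced (Q * ('X^(n * k) + (a ^+ k)%:P)).
Proof.
move=> k_gt0 m; have nk_gt0 : (0 < n * k)%N by rewrite muln_gt0 n_gt0.
have wGm := weight_gen Q k m; set u := if _ then _ else _ in wGm.
case: (addr_sel total u (weight Q m)) => e; rewrite e in wGm; last first.
  exists (m + n * k)%N; split.
  - by rewrite -{2}[m]addn0 eqn_add2l -lt0n.
  - by rewrite addnC [(n * k)%N]mulnC modnMDl.
  - rewrite wGm weight_gen ltnNge leq_addl /= addnK.
    by apply: sle_mulr; exact: sle_addl.
move: wGm; rewrite /u; case: ltnP => [_ | nk_le_m] wGm.
  by apply: rival_of_null; rewrite wGm mul0r.
exists (m - n * k)%N; split.
- by rewrite neq_ltn ltn_subrL nk_gt0 (leq_trans nk_gt0 nk_le_m).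
- by rewrite -{2}(subnK nk_le_m) addnC [(n * k)%N]mulnC modnMDl.
- by rewrite wGm weight_gen; apply: sle_mulr; exact: sle_addr.
Qed.

Lemma J_balanced P : J P -> balanced P.
Proof.
case=> s ->; elim: s => [|x s IH]; first by rewrite big_nil; exact: balanced0.
by rewrite big_cons; apply: balancedD => //; exact: balanced_gen.
Qed.

Definition restrict (c : pred nat) P :=
  \poly_(i < size P) (if c i then P`_i else 0).

Lemma coef_restrict (c : pred nat) P i :
  (restrict c P)`_i = if c i then P`_i else 0.
Proof.
rewrite coef_poly; case: ltnP => // iP.
by rewrite nth_default //; case: (c i).
Qed.

Lemma restrict_split (c : pred nat) P : P = restrict c P + restrict (predC c) P.
Proof.
apply/polyP => i; rewrite coefD !coef_restrict /=.
by case: (c i); rewrite ?addr0 ?add0r.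
Qed.

Lemma weight_restrict (c : pred nat) P m :
  weight (restrict c P) m = if c m then weight P m else 0.
Proof. by rewrite /weight coef_restrict; case: (c m); rewrite ?mul0r. Qed.

Lemma phi_restrict (c : pred nat) P :
  (forall m, exists m', [/\ m' = m %[mod n], c m' & weight P m ≼ weight P m']) ->
  phi n a (restrict c P) = phi n a P.
Proof.
move=> dom; apply/polyP => j; apply: sle_anti.
  apply: phi_coef_lub => m <-; apply: sle_trans (phi_coef_ub P m).
  by rewrite weight_restrict; case: (c m); [exact: sle_refl | exact: sle0x].
have [-> | [m [<- ->]]] := phi_coef_attained P j; first exact: sle0x.
have [m' [<- cm' le]] := dom m; apply: sle_trans le _.
have -> : weight P m' = weight (restrict c P) m' by rewrite weight_restrict cm'.
exact: phi_coef_ub.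
Qed.

(* Split P into one maximiser per class and the rest; balance gives the rest
   a rival of each maximiser, so both parts have the same image as P. *)
Lemma balanced_singular P : balanced P -> star_singular (phi n a) P.
Proof.
move=> bal; have [sel selP] := class_selection one_add1 total n (@weight_null P).
pose chosen := [pred m | sel m == m].
have dom_chosen m :
    exists m', [/\ m' = m %[mod n], chosen m' & weight P m ≼ weight P m'].
  have [cls same ub] := selP m.
  by exists (sel m); split; [| rewrite /= (same _ cls) | exact: ub].
have dom_other m :
    exists m', [/\ m' = m %[mod n], predC chosen m' & weight P m ≼ weight P m'].
  have [cls same ub] := selP m; have [m1 [ne cls1 le]] := bal (sel m).
  rewrite cls in cls1; exists m1; split => //.
    by rewrite /= (same _ cls1) eq_sym.
  exact: sle_trans (ub _ (erefl _)) le.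
exists (restrict (predC chosen) P), (restrict chosen P); split.
- by rewrite addrC -restrict_split.
- by move=> m; rewrite !coef_restrict /=; case: (sel m == m); [left | right].
- by rewrite !phi_restrict.
Qed.

Lemma J0 : J 0.
Proof. by exists [::]; rewrite big_nil. Qed.

Lemma JD P Q : J P -> J Q -> J (P + Q).
Proof. by case=> s -> [t ->]; exists (s ++ t); rewrite big_cat. Qed.

Lemma J_sum (I : Type) (r : seq I) (p : pred I) (F : I -> {poly K}) :
  (forall i, p i -> J (F i)) -> J (\sum_(i <- r | p i) F i).
Proof.
move=> JF; elim/big_rec: _ => [|i P pi JP]; first exact: J0.
by apply: JD => //; exact: JF.
Qed.

Lemma J_gen Q k : (0 < k)%N -> J (Q * ('X^(n * k) + (a ^+ k)%:P)).
Proof. by move=> k_gt0; exists [:: (Q, k.-1)]; rewrite big_seq1 prednK. Qed.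

(* For a = 0 only the monomials of degree < n have nonzero weight, and such a
   weight has no rival: a balanced P has no monomial of degree < n. *)
Lemma balanced_low_coef P m : a = 0 -> balanced P -> (m < n)%N -> P`_m = 0.
Proof.
move=> a0 bal mn; have [m' [ne cls le]] := bal m.
have q' : (0 < m' %/ n)%N.
  rewrite lt0n; apply: contra ne => /eqP q0.
  by rewrite (divn_eq m' n) q0 mul0n add0n cls modn_small.
move: le; rewrite /weight a0 (divn_small mn) expr0n mulr1.
by rewrite expr0n eqn0Ngt q' mulr0 => /sle0.
Qed.

(* For a = 0, J is generated by X^n. *)
Lemma J_of_low_vanishing P : a = 0 -> (forall m, (m < n)%N -> P`_m = 0) -> J P.
Proof.
move=> a0 low; rewrite -[P]coefK poly_def; apply: J_sum => i _.
have [/low-> | ni] := ltnP i n; first by rewrite scale0r; exact: J0.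
have -> : P`_i *: 'X^i = (P`_i *: 'X^(i - n)) * ('X^(n * 1) + (a ^+ 1)%:P).
  by rewrite a0 expr1 addr0 muln1 -scalerAl -exprD subnK.
exact: J_gen.
Qed.

Section Invertible.

Variable b : K.
Hypothesis ab : a * b = 1.

Lemma mul_expK x q : x * a ^+ q * b ^+ q = x.
Proof. by rewrite -mulrA -exprMn ab expr1n mulr1. Qed.

Lemma mul_expI x y q : x * a ^+ q = y * a ^+ q -> x = y.
Proof. by move=> /(congr1 (fun z => z * b ^+ q)); rewrite !mul_expK. Qed.

Lemma sle_expI x y q : x * a ^+ q ≼ y * a ^+ q -> x ≼ y.
Proof. by move=> /(sle_mulr (b ^+ q)); rewrite !mul_expK. Qed.

(* Two monomials of equal weight in the same class (s = m + nk, say) form a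
   multiple d X^m (X^(nk) + a^k) of a generator. *)
Lemma binomial_in_J c d m s : m = s %[mod n] -> m != s ->
  c * a ^+ (m %/ n) = d * a ^+ (s %/ n) -> J (c%:P * 'X^m + d%:P * 'X^s).
Proof.
wlog lt_ms : c d m s / (m %/ n < s %/ n)%N.
  move=> hw cls ne e; have [lt | gt | eq] := ltngtP (m %/ n) (s %/ n).
  - exact: hw.
  - by rewrite addrC; apply: hw; rewrite // eq_sym.
  - by move: ne; rewrite (divn_eq m n) (divn_eq s n) eq cls eqxx.
move=> cls ne e; set k := (s %/ n - m %/ n)%N.
have es : s = (m + n * k)%N := shift_eq cls (ltnW lt_ms).
have ec : c = d * a ^+ k.
  by apply: (mul_expI (q := m %/ n)); rewrite e -mulrA -exprD subnK // ltnW.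
have -> : c%:P * 'X^m + d%:P * 'X^s = d%:P * 'X^m * ('X^(n * k) + (a ^+ k)%:P).
  by rewrite es ec mulrDr -mulrA -exprD polyCM mulrAC addrC.
by apply: J_gen; rewrite subn_gt0.
Qed.

(* With a invertible, a balanced P is the sum, over the degrees m that are
   not the chosen maximiser sel m of their class, of the binomials pairing
   P_m X^m with a monomial at sel m of the same weight. *)
Section Decomposition.

Variables (P : {poly K}) (sel : nat -> nat).
Hypothesis bal : balanced P.
Hypothesis selP : forall m, [/\ sel m = m %[mod n],
  (forall m', m' = m %[mod n] -> sel m' = sel m) &
  (forall m', m' = m %[mod n] -> weight P m' ≼ weight P (sel m))].

(* The coefficient at sel m carrying the weight of X^m. *)
Definition transfer m := weight P m * b ^+ (sel m %/ n).

Definition binom m := (P`_m)%:P * 'X^m + (transfer m)%:P * 'X^(sel m).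

Lemma transferK m : transfer m * a ^+ (sel m %/ n) = weight P m.
Proof. by rewrite /transfer mulrAC mul_expK. Qed.

Lemma binom_in_J m : sel m != m -> J (binom m).
Proof.
have [cls _ _] := selP m; move=> ne.
by apply: binomial_in_J; rewrite ?cls 1?eq_sym ?transferK.
Qed.

Lemma coef_binom m j : (binom m)`_j =
  (if j == m then P`_m else 0) + (if j == sel m then transfer m else 0).
Proof.
by rewrite coefD !coefCM !coefXn; case: eqP; case: eqP; rewrite ?mulr1 ?mulr0.
Qed.

(* No binomial exceeds P at any degree, the transferred coefficients being
   bounded by the maximality of sel m ... *)
Lemma decomposition_le j :
  \sum_(m < size P | sel m != m) (binom m)`_j ≼ P`_j.
Proof.
apply: sum_lub => m sm; rewrite coef_binom; have [-> | jm] := eqVneq j m.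
  by rewrite eq_sym (negbTE sm) addr0; exact: sle_refl.
rewrite add0r; case: eqP => [-> | _]; last exact: sle0x.
have [_ _ ub] := selP m; apply: (sle_expI (q := sel m %/ n)).
by rewrite transferK; exact: ub.
Qed.

(* ... and each coefficient of P is reached: directly when j is not chosen,
   and through the rival of j when it is. *)
Lemma decomposition_ge j :
  P`_j ≼ \sum_(m < size P | sel m != m) (binom m)`_j.
Proof.
have term_ub (m : 'I_(size P)) : sel m != m ->
    (binom m)`_j ≼ \sum_(m < size P | sel m != m) (binom m)`_j.
  exact: (@sum_ub K one_add1 _ _ (fun m : 'I_(size P) => sel m != m) _ _
    (mem_index_enum m)).
have [sj | sj] := eqVneq (sel j) j; last first.
  have [jP | /(nth_default 0)->] := ltnP j (size P); last exact: sle0x.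
  apply: sle_trans (term_ub (Ordinal jP) sj).
  by rewrite coef_binom eqxx eq_sym (negbTE sj) addr0; exact: sle_refl.
have [m1 [ne cls1 le]] := bal j; have [_ same ub] := selP j.
have sel_m1 : sel m1 = j by rewrite same.
have w_eq : weight P m1 = weight P j.
  by apply: sle_anti => //; rewrite -sj; exact: ub.
have [m1P | m1_big] := ltnP m1 (size P); last first.
  suff -> : P`_j = 0 by exact: sle0x.
  apply: (mul_expI (q := j %/ n)); rewrite mul0r; change (weight P j = 0).
  by rewrite -w_eq weight_null.
apply: sle_trans (term_ub (Ordinal m1P) _); last by rewrite /= sel_m1 eq_sym.
rewrite coef_binom /= eq_sym (negbTE ne) sel_m1 eqxx add0r /transfer sel_m1.
by rewrite w_eq mul_expK; exact: sle_refl.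
Qed.

Lemma decomposition : P = \sum_(m < size P | sel m != m) binom m.
Proof.
apply/polyP => j; rewrite coef_sum.
by apply: sle_anti; [exact: decomposition_ge | exact: decomposition_le].
Qed.

End Decomposition.

Lemma balanced_J_unit P : balanced P -> J P.
Proof.
move=> bal; have [sel selP] := class_selection one_add1 total n (@weight_null P).
rewrite (decomposition bal selP); apply: J_sum => m; exact: binom_in_J.
Qed.

End Invertible.

Lemma balanced_J P : (forall x : K, x != 0 -> exists y, x * y = 1) ->
  balanced P -> J P.
Proof.
move=> inv bal; have [a0 | /inv [b ab]] := eqVneq a 0.
  by apply: J_of_low_vanishing => // m; exact: balanced_low_coef.
exact: balanced_J_unit ab _ bal.
Qed.

End Weights.

Theorem lemma3p4 (K : comNzSemiRingType) (hK : quasi_field_char1 K)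
    (htot : totally_ordered_char1 K) (a : K) (n : nat) (hn : (1 <= n)%N)
    (P : {poly K}) :
  star_singular (phi n a) P <-> in_ideal_J n a P.
Proof.
have [one_add1 inv] := hK.
split=> [/(singular_balanced one_add1 htot hn) | /(J_balanced one_add1 htot hn)].
  exact: balanced_J.
exact: balanced_singular.
Qed.
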